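(* Let $\lambda_0,\dots,\lambda_n\in\mathbb{C}$, $n\ge1$, $a\neq b$ real, and suppose $E_{(\lambda_0,\dots,\lambda_n)}$ and $E_{(\lambda_0,\dots,\lambda_{n-1})}$ are extended Chebyshev systems for $\{a,b\}$. For $k=0,\dots,n-1$ let $$d_k:=\lim_{x\to b}\frac{\frac{d}{dx}p_{(\lambda_0,\dots,\lambda_n),k}(x)}{p_{(\lambda_0,\dots,\lambda_{n-1}),k}(x)}$$ (these limits exist and are nonzero). Then for all $x\in\mathbb{R}$ $$e^{(x-a)\lambda_n}=p_{(\lambda_0,\dots,\lambda_n),0}(x)+\sum_{k=1}^n(-1)^k d_0\cdots d_{k-1}\,p_{(\lambda_0,\dots,\lambda_n),k}(x),$$ and for $k=1,\dots,n-1$, $$d_0\cdots d_{k-1}=(-1)^n\frac{e^{(b-a)\lambda_n}}{p_{(\lambda_0,\dots,\lambda_n),n}(b)}\cdot\frac{1}{d_k\cdots d_{n-1}}.$$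
   Context: $E_{(\lambda_0,\dots,\lambda_m)}$ denotes the space of all $f\in C^\infty(\mathbb{R},\mathbb{C})$ with $(\frac{d}{dx}-\lambda_0)\cdots(\frac{d}{dx}-\lambda_m)f=0$ (dimension $m+1$). A zero of order (exactly) $k$ at $a$ means $f(a)=\dots=f^{(k-1)}(a)=0$, $f^{(k)}(a)\neq0$. $E_{(\lambda_0,\dots,\lambda_m)}$ is an extended Chebyshev system for $A\subset\mathbb{R}$ if every nonzero element has at most $m$ zeros in $A$ counted with multiplicity. In that case, for $A=\{a,b\}$, $a\ne b$, the Bernstein basis $p_{(\lambda_0,\dots,\lambda_m),k}$, $k=0,\dots,m$, is the unique family in $E_{(\lambda_0,\dots,\lambda_m)}$ with $p_{(\lambda_0,\dots,\lambda_m),k}$ having a zero of order exactly $k$ at $a$ and exactly $m-k$ at $b$, and $p^{(k)}_{(\lambda_0,\dots,\lambda_m),k}(a)=1$. *)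

From Stdlib Require Import Reals Lra List.
Open Scope R_scope.

Record Cx := mkC { Re : R; Im : R }.

Definition Czero : Cx := mkC 0 0.
Definition Cone : Cx := mkC 1 0.
Definition RtoC (r : R) : Cx := mkC r 0.
Definition Cadd (z w : Cx) : Cx := mkC (Re z + Re w) (Im z + Im w).
Definition Copp (z : Cx) : Cx := mkC (- Re z) (- Im z).
Definition Csub (z w : Cx) : Cx := Cadd z (Copp w).
Definition Cmul (z w : Cx) : Cx :=
  mkC (Re z * Re w - Im z * Im w) (Re z * Im w + Im z * Re w).
Definition Cinv (z : Cx) : Cx :=
  let r := Re z * Re z + Im z * Im z in mkC (Re z / r) (- Im z / r).
Definition Cdiv (z w : Cx) : Cx := Cmul z (Cinv w).
Definition Cmod (z : Cx) : R := sqrt (Re z * Re z + Im z * Im z).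
Definition Cexp (z : Cx) : Cx :=
  mkC (exp (Re z) * cos (Im z)) (exp (Re z) * sin (Im z)).
Fixpoint Cpow (z : Cx) (n : nat) : Cx :=
  match n with O => Cone | S n' => Cmul z (Cpow z n') end.

Fixpoint Csum (f : nat -> Cx) (n : nat) : Cx :=
  match n with O => Czero | S n' => Cadd (Csum f n') (f n') end.
Fixpoint Cprod_from (d : nat -> Cx) (i len : nat) : Cx :=
  match len with O => Cone | S l => Cmul (d i) (Cprod_from d (S i) l) end.

Definition is_derivC (f f' : R -> Cx) : Prop :=
  forall x, derivable_pt_lim (fun t => Re (f t)) x (Re (f' x)) /\
            derivable_pt_lim (fun t => Im (f t)) x (Im (f' x)).

(** [D] is a chain of successive derivatives: D k is the k-th derivative of D 0.
    A function f is Cx^infinity iff such a chain with D 0 = f exists (and then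
    it is unique). *)
Definition deriv_chain (D : nat -> R -> Cx) : Prop :=
  forall k, is_derivC (D k) (D (S k)).

(** Applying (d/dx - l) to the chain of derivatives of f gives the chain of
    derivatives of f' - l f. *)
Definition shift_op (l : Cx) (D : nat -> R -> Cx) : nat -> R -> Cx :=
  fun k x => Csub (D (S k) x) (Cmul l (D k x)).

(** [apply_ops [l0;...;lm] D] = (d/dx - l0) ... (d/dx - lm) applied to D. *)
Definition apply_ops (ls : list Cx) (D : nat -> R -> Cx) : nat -> R -> Cx :=
  fold_right shift_op D ls.

Definition in_E (ls : list Cx) (D : nat -> R -> Cx) : Prop :=
  deriv_chain D /\ forall x, apply_ops ls D 0%nat x = Czero.

Definition lams (l : nat -> Cx) (m : nat) : list Cx := map l (seq 0 (S m)).

(** Extended Chebyshev system for A: E_ls has dimension m+1 = length ls, and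
    every nonzero element has at most m zeros in A counted with multiplicity. *)
Definition ECT (ls : list Cx) (A : R -> Prop) : Prop :=
  forall D : nat -> R -> Cx, in_E ls D ->
    (exists x, D 0%nat x <> Czero) ->
    forall (pts : list R) (mult : R -> nat),
      NoDup pts -> (forall x, In x pts -> A x) ->
      (forall x, In x pts -> forall j, (j < mult x)%nat -> D j x = Czero) ->
      (list_sum (map mult pts) <= length ls - 1)%nat.

Definition zero_order (D : nat -> R -> Cx) (a : R) (k : nat) : Prop :=
  (forall j, (j < k)%nat -> D j a = Czero) /\ D k a <> Czero.

(** P k (a chain of derivatives) describes the Bernstein basis element
    p_{ls,k} = P k 0, for k = 0..m. *)
Definition bernstein_basis (ls : list Cx) (a b : R) (P : nat -> nat -> R -> Cx) : Prop :=
  let m := (length ls - 1)%nat in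
  forall k, (k <= m)%nat ->
    in_E ls (P k) /\ zero_order (P k) a k /\ zero_order (P k) b (m - k) /\
    P k k a = Cone.

Definition Clim (g : R -> Cx) (b : R) (l : Cx) : Prop :=
  forall eps, 0 < eps -> exists delta, 0 < delta /\
    forall x, x <> b -> Rabs (x - b) < delta -> Cmod (Csub (g x) l) < eps.

(* Write L = d/dx - l_n, p_i = p_(l_0..l_n),i and q_k = p_(l_0..l_(n-1)),k.
   L maps E_(l_0..l_n) into E_(l_0..l_(n-1)), and in an extended Chebyshev
   space for {a, b} of order m an element is determined by i Hermite data at
   a together with m + 1 - i Hermite data at b.  Comparing such data gives
     L p_0 = d_0 q_0,   L p_i = q_(i-1) + d_i q_i  (0 < i < n),   L p_n = q_(n-1),
   with d_k = p_k^(n-k)(b) / q_k^(n-1-k)(b); a Taylor (l'Hopital) argument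
   shows that d_k is the limit of p_k' / q_k at b.  With
   c_i = (-1)^i d_0 ... d_(i-1), the sum of the c_i p_i is killed by L
   (telescoping) and equals 1 at a, so it is exp((x - a) l_n) by uniqueness in
   E_(l_0..l_n).  Evaluating at b, where only p_n survives, gives the
   product identity. *)

From Stdlib Require Import Reals Lra Lia List Classical Factorial.
From Coquelicot Require Import Derive.
Open Scope R_scope.

(** * Arithmetic of [Cx] *)

Lemma Cext (z w : Cx) : Re z = Re w -> Im z = Im w -> z = w.
Proof. destruct z, w; simpl; intros; subst; reflexivity. Qed.

Ltac Cring := apply Cext; simpl; ring.

Lemma Cnorm_nonzero (z : Cx) : z <> Czero -> Re z * Re z + Im z * Im z <> 0.
Proof.
  intros Hz E; apply Hz; destruct z as [p q]; simpl in *.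
  assert (p = 0) by nra; assert (q = 0) by nra; subst; reflexivity.
Qed.

Lemma Cmul_inv_r (z : Cx) : z <> Czero -> Cmul z (Cinv z) = Cone.
Proof.
  intros Hz; pose proof (Cnorm_nonzero z Hz).
  destruct z as [p q]; apply Cext; simpl in *; field; assumption.
Qed.

Lemma Cmul_nonzero (z w : Cx) : z <> Czero -> w <> Czero -> Cmul z w <> Czero.
Proof.
  intros Hz Hw E; apply Hw.
  transitivity (Cmul (Cmul z (Cinv z)) w); [rewrite Cmul_inv_r by exact Hz; Cring|].
  transitivity (Cmul (Cinv z) (Cmul z w)); [Cring | rewrite E; Cring].
Qed.

Lemma Cinv_nonzero (z : Cx) : z <> Czero -> Cinv z <> Czero.
Proof.
  intros Hz E; pose proof (Cmul_inv_r z Hz) as H; rewrite E in H.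
  injection H; lra.
Qed.

Lemma Cdiv_mul_r (z w : Cx) : w <> Czero -> Cmul (Cdiv z w) w = z.
Proof.
  intros Hw; unfold Cdiv.
  transitivity (Cmul z (Cmul w (Cinv w))); [Cring | rewrite Cmul_inv_r by exact Hw; Cring].
Qed.

Lemma Csub_eq0 (z w : Cx) : Csub z w = Czero -> z = w.
Proof.
  destruct z, w; unfold Csub, Cadd, Copp, Czero; simpl; intros H; injection H; intros.
  apply Cext; simpl; lra.
Qed.

Lemma Cdiv_scale (r : R) (z w : Cx) :
  r <> 0 -> Cdiv (Cmul (RtoC r) z) (Cmul (RtoC r) w) = Cdiv z w.
Proof.
  intros Hr; destruct z as [p q], w as [u v]; unfold Cdiv, Cmul, Cinv, RtoC; simpl.
  destruct (Req_dec (u * u + v * v) 0) as [E|E].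
  - assert (u = 0) by nra; assert (v = 0) by nra; subst.
    replace ((r * 0 - 0 * 0) * (r * 0 - 0 * 0) + (r * 0 + 0 * 0) * (r * 0 + 0 * 0))
      with 0 by ring.
    replace (0 * 0 + 0 * 0) with 0 by ring; unfold Rdiv; rewrite Rinv_0.
    apply Cext; simpl; ring.
  - assert (r * r <> 0) by (apply Rmult_integral_contrapositive; auto).
    apply Cext; simpl; field; split; auto; nra.
Qed.

Lemma Cpow_sign_sq (k : nat) : Cmul (Cpow (Copp Cone) k) (Cpow (Copp Cone) k) = Cone.
Proof.
  induction k as [|k IH]; simpl; [Cring|].
  transitivity (Cmul (Cpow (Copp Cone) k) (Cpow (Copp Cone) k)); [Cring | exact IH].
Qed.

Lemma Cprod_nonzero (d : nat -> Cx) (s l : nat) :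
  (forall i, (s <= i < s + l)%nat -> d i <> Czero) -> Cprod_from d s l <> Czero.
Proof.
  revert s; induction l as [|l IH]; intros s H; simpl.
  - intros E; injection E; lra.
  - apply Cmul_nonzero; [apply H; lia | apply IH; intros; apply H; lia].
Qed.

Lemma Cprod_split (d : nat -> Cx) (s k l : nat) :
  Cprod_from d s (k + l) = Cmul (Cprod_from d s k) (Cprod_from d (s + k) l).
Proof.
  revert s; induction k as [|k IH]; intros s; simpl.
  - rewrite Nat.add_0_r; generalize (Cprod_from d s l); intros; Cring.
  - rewrite IH, <- Nat.add_succ_comm; generalize (Cprod_from d (S s) k); intros; Cring.
Qed.

Lemma Cprod_last (d : nat -> Cx) (s l : nat) :
  Cprod_from d s (S l) = Cmul (Cprod_from d s l) (d (s + l)%nat).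
Proof.
  rewrite <- Nat.add_1_r, Cprod_split; simpl; generalize (Cprod_from d s l); intros; Cring.
Qed.

Lemma Csum_zero (f : nat -> Cx) (N : nat) :
  (forall i, (i < N)%nat -> f i = Czero) -> Csum f N = Czero.
Proof. induction N; intros H; simpl; [reflexivity | rewrite IHN, H; auto; Cring]. Qed.

Lemma Csum_first (f : nat -> Cx) (N : nat) :
  Csum f (S N) = Cadd (f 0%nat) (Csum (fun i => f (S i)) N).
Proof.
  induction N; simpl in *; [Cring|].
  rewrite IHN; generalize (Csum (fun i => f (S i)) N); intros; Cring.
Qed.

(** * Derivative chains and the spaces [E] *)

Lemma derivable_pt_lim_congr (f g : R -> R) (x l l' : R) :
  (forall t, f t = g t) -> l = l' -> derivable_pt_lim f x l -> derivable_pt_lim g x l'.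
Proof.
  intros E <-; apply derivable_pt_lim_ext, E.
Qed.

Lemma is_derivC_ext (f g f' g' : R -> Cx) :
  (forall x, f x = g x) -> (forall x, f' x = g' x) -> is_derivC f f' -> is_derivC g g'.
Proof.
  intros E E' H x; destruct (H x) as [HRe HIm]; rewrite <- E'.
  split; [apply (derivable_pt_lim_congr _ _ _ _ _ (fun t => f_equal Re (E t)) eq_refl HRe)
         |apply (derivable_pt_lim_congr _ _ _ _ _ (fun t => f_equal Im (E t)) eq_refl HIm)].
Qed.

Lemma is_derivC_lin (al be : Cx) (f f' g g' : R -> Cx) :
  is_derivC f f' -> is_derivC g g' ->
  is_derivC (fun x => Cadd (Cmul al (f x)) (Cmul be (g x)))
            (fun x => Cadd (Cmul al (f' x)) (Cmul be (g' x))).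
Proof.
  intros Hf Hg x; destruct (Hf x) as [Rf If], (Hg x) as [Rg Ig]; simpl.
  assert (Lin : forall u1 u2 v1 v2 l1 l2 m1 m2 c1 c2 c3 c4,
    derivable_pt_lim u1 x l1 -> derivable_pt_lim u2 x l2 ->
    derivable_pt_lim v1 x m1 -> derivable_pt_lim v2 x m2 ->
    derivable_pt_lim (fun t => c1 * u1 t - c2 * u2 t + (c3 * v1 t - c4 * v2 t)) x
      (c1 * l1 - c2 * l2 + (c3 * m1 - c4 * m2))).
  { intros; apply (derivable_pt_lim_plus (fun t => _ - _) (fun t => _ - _));
      apply (derivable_pt_lim_minus (fun t => _ * _) (fun t => _ * _));
      apply derivable_pt_lim_scal; assumption. }
  split; [now apply Lin|].
  eapply derivable_pt_lim_congr;
    [| | apply (Lin _ _ _ _ _ _ _ _ (Re al) (- Im al) (Re be) (- Im be) If Rf Ig Rg)];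
    intros; simpl; ring.
Qed.

Lemma deriv_chain_ext (D D' : nat -> R -> Cx) :
  deriv_chain D -> (forall j x, D j x = D' j x) -> deriv_chain D'.
Proof. intros H E k; eapply is_derivC_ext; [| | apply H]; auto. Qed.

Lemma deriv_chain_lin (al be : Cx) (D1 D2 : nat -> R -> Cx) :
  deriv_chain D1 -> deriv_chain D2 ->
  deriv_chain (fun j x => Cadd (Cmul al (D1 j x)) (Cmul be (D2 j x))).
Proof. intros H1 H2 k; apply is_derivC_lin; auto. Qed.

Lemma deriv_chain_shift (l : Cx) (D : nat -> R -> Cx) :
  deriv_chain D -> deriv_chain (shift_op l D).
Proof.
  intros H; eapply deriv_chain_ext;
    [apply (deriv_chain_lin Cone (Copp l) (fun j => D (S j)) D); auto; intros k; apply H|].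
  intros; unfold shift_op; Cring.
Qed.

Lemma apply_ops_ext (ls : list Cx) (D D' : nat -> R -> Cx) :
  (forall j x, D j x = D' j x) -> forall j x, apply_ops ls D j x = apply_ops ls D' j x.
Proof.
  induction ls as [|l ls IH]; intros E j x; simpl; auto.
  unfold shift_op; rewrite !IH; auto.
Qed.

Lemma apply_ops_zero (ls : list Cx) (j : nat) (x : R) :
  apply_ops ls (fun _ _ => Czero) j x = Czero.
Proof.
  revert j; induction ls as [|l ls IH]; intros j; simpl; auto.
  unfold shift_op; rewrite !IH; Cring.
Qed.

Lemma apply_ops_lin (ls : list Cx) (al be : Cx) (D1 D2 : nat -> R -> Cx) (j : nat) (x : R) :
  apply_ops ls (fun j x => Cadd (Cmul al (D1 j x)) (Cmul be (D2 j x))) j x =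
  Cadd (Cmul al (apply_ops ls D1 j x)) (Cmul be (apply_ops ls D2 j x)).
Proof.
  revert j; induction ls as [|l ls IH]; intros j; simpl; auto.
  unfold shift_op; rewrite !IH; Cring.
Qed.

Lemma in_E_lin (ls : list Cx) (al be : Cx) (D1 D2 : nat -> R -> Cx) :
  in_E ls D1 -> in_E ls D2 ->
  in_E ls (fun j x => Cadd (Cmul al (D1 j x)) (Cmul be (D2 j x))).
Proof.
  intros [C1 Z1] [C2 Z2]; split; [apply deriv_chain_lin; auto|].
  intros x; rewrite apply_ops_lin, Z1, Z2; Cring.
Qed.

Lemma in_E_ext (ls : list Cx) (D D' : nat -> R -> Cx) :
  in_E ls D -> (forall j x, D j x = D' j x) -> in_E ls D'.
Proof.
  intros [C Z] E; split; [eapply deriv_chain_ext; eauto|].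
  intros x; rewrite <- (apply_ops_ext ls D D' E); auto.
Qed.

Lemma length_lams (lam : nat -> Cx) (m : nat) : length (lams lam m) = S m.
Proof. unfold lams; rewrite length_map, length_seq; reflexivity. Qed.

Lemma apply_ops_lams (lam : nat -> Cx) (n : nat) (D : nat -> R -> Cx) :
  (1 <= n)%nat -> forall j x,
  apply_ops (lams lam n) D j x = apply_ops (lams lam (n - 1)) (shift_op (lam n) D) j x.
Proof.
  intros Hn; destruct n as [|m]; [lia|]; rewrite Nat.sub_1_r; simpl Nat.pred.
  unfold lams; rewrite (seq_S (S m)), map_app; unfold apply_ops.
  rewrite fold_right_app; reflexivity.
Qed.

Lemma in_E_shift (lam : nat -> Cx) (n : nat) (D : nat -> R -> Cx) :
  (1 <= n)%nat -> in_E (lams lam n) D -> in_E (lams lam (n - 1)) (shift_op (lam n) D).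
Proof.
  intros Hn [C Z]; split; [now apply deriv_chain_shift|].
  intros x; rewrite <- apply_ops_lams; auto.
Qed.

Lemma in_E_of_shift_zero (lam : nat -> Cx) (n : nat) (D : nat -> R -> Cx) :
  (1 <= n)%nat -> deriv_chain D -> (forall j x, shift_op (lam n) D j x = Czero) ->
  in_E (lams lam n) D.
Proof.
  intros Hn C Z; split; [exact C|].
  intros x; rewrite apply_ops_lams, (apply_ops_ext _ _ _ Z) by exact Hn.
  apply apply_ops_zero.
Qed.

Lemma shift_zero_derivs (l : Cx) (D : nat -> R -> Cx) (x : R) :
  (forall j, shift_op l D j x = Czero) -> forall j, D j x = Cmul (Cpow l j) (D 0%nat x).
Proof.
  intros Z j; induction j as [|j IH]; simpl; [Cring|].
  rewrite (Csub_eq0 _ _ (Z j)), IH; Cring.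
Qed.

Lemma shift_op_at_zero (l : Cx) (D : nat -> R -> Cx) (j : nat) (x : R) :
  D j x = Czero -> shift_op l D j x = D (S j) x.
Proof. intros Z; unfold shift_op; rewrite Z; Cring. Qed.

(** * Linear combinations of chains, and a telescoping sum *)

Lemma deriv_chain_Csum (c : nat -> Cx) (D : nat -> nat -> R -> Cx) (N : nat) :
  (forall i, (i < N)%nat -> deriv_chain (D i)) ->
  deriv_chain (fun j x => Csum (fun i => Cmul (c i) (D i j x)) N).
Proof.
  induction N as [|N IH]; intros HD.
  - intros k x; split; apply (derivable_pt_lim_const 0).
  - eapply deriv_chain_ext;
      [apply (deriv_chain_lin Cone (c N) (fun j x => Csum (fun i => Cmul (c i) (D i j x)) N) (D N));
       [apply IH; auto | apply HD; lia]|].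
    intros; simpl; Cring.
Qed.

Lemma shift_op_Csum (l : Cx) (c : nat -> Cx) (D : nat -> nat -> R -> Cx) (N j : nat) (x : R) :
  shift_op l (fun j x => Csum (fun i => Cmul (c i) (D i j x)) N) j x =
  Csum (fun i => Cmul (c i) (shift_op l (D i) j x)) N.
Proof.
  unfold shift_op; induction N as [|N IH]; simpl; [Cring|].
  rewrite <- IH; generalize (Csum (fun i => Cmul (c i) (D i (S j) x)) N)
                             (Csum (fun i => Cmul (c i) (D i j x)) N); intros; Cring.
Qed.

Lemma telescoping_sum (n : nat) (c dd q H : nat -> Cx) :
  (1 <= n)%nat -> c 0%nat = Cone -> (forall i, c (S i) = Copp (Cmul (c i) (dd i))) ->
  H 0%nat = Cmul (dd 0%nat) (q 0%nat) ->
  (forall i, (S i < n)%nat -> H (S i) = Cadd (q i) (Cmul (dd (S i)) (q (S i)))) ->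
  H n = q (n - 1)%nat ->
  Csum (fun i => Cmul (c i) (H i)) (S n) = Czero.
Proof.
  intros Hn c0 cS H0 HS Hlast.
  assert (Partial : forall N, (N < n)%nat ->
            Csum (fun i => Cmul (c i) (H i)) (S N) = Cmul (Cmul (c N) (dd N)) (q N)).
  { induction N as [|N IH]; intros HN; simpl.
    - rewrite H0, c0; Cring.
    - simpl in IH; rewrite IH, HS, cS by lia; Cring. }
  destruct n as [|m]; [lia|]; rewrite Nat.sub_1_r in Hlast; simpl Nat.pred in Hlast.
  change (Cadd (Csum (fun i => Cmul (c i) (H i)) (S m)) (Cmul (c (S m)) (H (S m))) = Czero).
  rewrite Partial, Hlast, cS by lia; Cring.
Qed.

(** * The exponential [x |-> exp((x - a) l)] and its derivatives [l^j exp((x - a) l)] *)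

Definition exp_chain (l : Cx) (a : R) (j : nat) (x : R) : Cx :=
  Cmul (Cpow l j) (Cexp (Cmul (RtoC (x - a)) l)).

Lemma derivable_pt_lim_affine (a c e x : R) :
  derivable_pt_lim (fun t => (t - a) * c + e) x c.
Proof.
  intros eps He; exists (mkposreal 1 Rlt_0_1); intros h Hh _.
  replace (((x + h - a) * c + e - ((x - a) * c + e)) / h - c) with 0 by (field; exact Hh).
  rewrite Rabs_R0; exact He.
Qed.

Lemma is_derivC_exp (l : Cx) (a : R) :
  is_derivC (fun x => Cexp (Cmul (RtoC (x - a)) l))
            (fun x => Cmul l (Cexp (Cmul (RtoC (x - a)) l))).
Proof.
  intros x; set (p := Re l); set (q := Im l).
  pose proof (derivable_pt_lim_affine a) as Lin.
  assert (ExpU := derivable_pt_lim_comp _ exp x _ _ (Lin p (- (0 * q)) x) (derivable_pt_lim_exp _)).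
  assert (CosV := derivable_pt_lim_comp _ cos x _ _ (Lin q (0 * p) x) (derivable_pt_lim_cos _)).
  assert (SinV := derivable_pt_lim_comp _ sin x _ _ (Lin q (0 * p) x) (derivable_pt_lim_sin _)).
  simpl; fold p q; split;
    [eapply derivable_pt_lim_congr; [| | apply (derivable_pt_lim_mult _ _ x _ _ ExpU CosV)]
    |eapply derivable_pt_lim_congr; [| | apply (derivable_pt_lim_mult _ _ x _ _ ExpU SinV)]];
    intros; unfold mult_fct, comp, Rminus; ring.
Qed.

Lemma exp_chain_deriv (l : Cx) (a : R) : deriv_chain (exp_chain l a).
Proof.
  intros j; eapply is_derivC_ext;
    [| | apply (is_derivC_lin (Cpow l j) Czero _ _ _ _ (is_derivC_exp l a) (is_derivC_exp l a))];
    intros; unfold exp_chain; simpl; Cring.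
Qed.

Lemma exp_chain_shift (l : Cx) (a : R) (j : nat) (x : R) :
  shift_op l (exp_chain l a) j x = Czero.
Proof. unfold shift_op, exp_chain; simpl; Cring. Qed.

Lemma exp_chain_at_a (l : Cx) (a : R) : exp_chain l a 0%nat a = Cone.
Proof.
  unfold exp_chain, Cexp; simpl; rewrite Rminus_diag.
  replace (0 * Re l - 0 * Im l) with 0 by ring; replace (0 * Im l + 0 * Re l) with 0 by ring.
  rewrite exp_0, cos_0, sin_0; Cring.
Qed.

(** * Uniqueness in an extended Chebyshev system *)

Lemma deriv_chain_zero (D : nat -> R -> Cx) :
  deriv_chain D -> (forall x, D 0%nat x = Czero) -> forall j x, D j x = Czero.
Proof.
  intros C Z j; induction j as [|j IH]; intros x; auto.
  destruct (C j x) as [HRe HIm].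
  assert (Const : forall g : R -> R, (forall t, g t = 0) -> derivable_pt_lim g x 0)
    by (intros g Hg; apply (derivable_pt_lim_ext (fct_cte 0)), derivable_pt_lim_const;
        intros; rewrite Hg; reflexivity).
  apply Cext; eapply uniqueness_limite; eauto;
    apply Const; intros; rewrite IH; reflexivity.
Qed.

Lemma ECT_zero (ls : list Cx) (A : R -> Prop) (W : nat -> R -> Cx)
    (pts : list R) (mult : R -> nat) :
  ECT ls A -> in_E ls W -> NoDup pts -> (forall x, In x pts -> A x) ->
  (forall x, In x pts -> forall j, (j < mult x)%nat -> W j x = Czero) ->
  (length ls - 1 < list_sum (map mult pts))%nat -> forall j x, W j x = Czero.
Proof.
  intros E HW ND HA HZ Hlt; apply deriv_chain_zero; [apply HW|].
  intros x; apply NNPP; intros Hx.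
  assert (list_sum (map mult pts) <= length ls - 1)%nat by (eapply E; eauto).
  lia.
Qed.

Lemma ECT_two_point_unique (ls : list Cx) (a b : R) (U V : nat -> R -> Cx) (ka kb : nat) :
  ECT ls (fun x => x = a \/ x = b) -> a <> b -> in_E ls U -> in_E ls V ->
  (forall j, (j < ka)%nat -> U j a = V j a) -> (forall j, (j < kb)%nat -> U j b = V j b) ->
  (length ls - 1 < ka + kb)%nat -> forall j x, U j x = V j x.
Proof.
  intros E Hab HU HV Za Zb Hl j x; apply Csub_eq0.
  set (W := fun j x => Cadd (Cmul Cone (U j x)) (Cmul (Copp Cone) (V j x))).
  assert (HW : forall j x, W j x = Csub (U j x) (V j x)) by (intros; unfold W; Cring).
  rewrite <- HW.
  apply (ECT_zero ls _ W (a :: b :: nil) (fun x => if Req_dec_T x a then ka else kb) E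
           (in_E_lin _ _ _ _ _ HU HV)).
  - constructor; [simpl; intros [H|[]]; auto | constructor; [simpl; tauto | constructor]].
  - simpl; intros y [H|[H|[]]]; subst; auto.
  - simpl; intros y [H|[H|[]]] i Hi; subst; rewrite HW.
    + destruct (Req_dec_T y y) as [_|]; [rewrite Za by exact Hi | congruence]; Cring.
    + destruct (Req_dec_T y a) as [|_]; [congruence | rewrite Zb by exact Hi]; Cring.
  - simpl; destruct (Req_dec_T a a); [|congruence].
    destruct (Req_dec_T b a); [congruence | lia].
Qed.

(** * Bernstein bases of [E_(l_0..l_m)] *)

Section BernsteinFacts.
Variables (lam : nat -> Cx) (m : nat) (a b : R) (P : nat -> nat -> R -> Cx).
Hypothesis BP : bernstein_basis (lams lam m) a b P.

Lemma bernstein_spec (k : nat) : (k <= m)%nat ->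
  in_E (lams lam m) (P k) /\ zero_order (P k) a k /\ zero_order (P k) b (m - k) /\
  P k k a = Cone.
Proof.
  intros Hk; generalize (BP k); unfold bernstein_basis in *;
    rewrite length_lams, Nat.sub_1_r; simpl Nat.pred; auto.
Qed.

Lemma bernstein_in_E (k : nat) : (k <= m)%nat -> in_E (lams lam m) (P k).
Proof. intros Hk; apply (bernstein_spec k Hk). Qed.

Lemma bernstein_zero_a (k j : nat) : (k <= m)%nat -> (j < k)%nat -> P k j a = Czero.
Proof. intros Hk; apply (bernstein_spec k Hk). Qed.

Lemma bernstein_one_a (k : nat) : (k <= m)%nat -> P k k a = Cone.
Proof. intros Hk; apply (bernstein_spec k Hk). Qed.

Lemma bernstein_zero_b (k j : nat) : (k <= m)%nat -> (j < m - k)%nat -> P k j b = Czero.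
Proof. intros Hk; apply (bernstein_spec k Hk). Qed.

Lemma bernstein_top_b (k : nat) : (k <= m)%nat -> P k (m - k)%nat b <> Czero.
Proof. intros Hk; apply (bernstein_spec k Hk). Qed.

End BernsteinFacts.

(** * A l'Hopital-type limit via Taylor bounds *)

Lemma mvt_power_bound (phi phi' : R -> R) (b K delta : R) (m : nat) :
  (forall y, derivable_pt_lim phi y (phi' y)) -> phi b = 0 -> 0 <= K ->
  (forall y, Rabs (y - b) < delta -> Rabs (phi' y) <= K * Rabs (y - b) ^ m) ->
  forall x, Rabs (x - b) < delta -> Rabs (phi x) <= K * Rabs (x - b) ^ S m.
Proof.
  intros D Hb HK Hphi' x Hx.
  destruct (MVT_abs phi phi' b x (fun c _ => D c)) as [c [Hc Hcb]].
  assert (Hcx : Rabs (c - b) <= Rabs (x - b)).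
  { unfold Rmin, Rmax in Hcb; destruct (Rle_dec b x); unfold Rabs;
      repeat destruct Rcase_abs; lra. }
  rewrite Hb, Rminus_0_r in Hc; rewrite Hc; simpl.
  rewrite (Rmult_comm (Rabs (x - b))), <- Rmult_assoc.
  apply Rmult_le_compat_r; [apply Rabs_pos|].
  apply (Rle_trans _ _ _ (Hphi' c ltac:(lra))).
  apply Rmult_le_compat_l; [exact HK|].
  apply pow_incr; split; [apply Rabs_pos | exact Hcx].
Qed.

Lemma taylor_monomial_deriv (b : R) (m : nat) (y : R) :
  derivable_pt_lim (fun t => (t - b) ^ S m / INR (fact (S m))) y ((y - b) ^ m / INR (fact m)).
Proof.
  assert (Hlin : derivable_pt_lim (fun t => t - b) y 1).
  { eapply derivable_pt_lim_congr; [| | apply (derivable_pt_lim_affine b 1 0)];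
      intros; cbv beta; ring. }
  assert (Hpow := derivable_pt_lim_comp _ (fun t => t ^ S m) y 1 _ Hlin
    (derivable_pt_lim_pow (y - b) (S m))).
  eapply derivable_pt_lim_congr;
    [| | apply (derivable_pt_lim_scal _ (/ INR (fact (S m))) y _ Hpow)].
  - intros t; unfold mult_real_fct, comp; unfold Rdiv; ring.
  - rewrite fact_simpl, mult_INR; simpl Nat.pred.
    assert (INR (fact m) <> 0) by apply INR_fact_neq_0.
    assert (INR (S m) <> 0) by (apply not_0_INR; lia).
    field; auto.
Qed.

Lemma taylor_remainder_bound (m : nat) : forall (f : nat -> R -> R) (b c eps delta : R),
  (forall j x, derivable_pt_lim (f j) x (f (S j) x)) -> (forall j, (j < m)%nat -> f j b = 0) ->
  0 <= eps -> (forall y, Rabs (y - b) < delta -> Rabs (f m y - c) <= eps) ->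
  forall x, Rabs (x - b) < delta ->
  Rabs (f 0%nat x - c * ((x - b) ^ m / INR (fact m))) <= eps * Rabs (x - b) ^ m.
Proof.
  induction m as [|m IH]; intros f b c eps delta Hd Hz He Hc x Hx.
  - simpl; replace (c * (1 / 1)) with c by field; rewrite Rmult_1_r; auto.
  - apply (mvt_power_bound (fun y => f 0%nat y - c * ((y - b) ^ S m / INR (fact (S m))))
             (fun y => f 1%nat y - c * ((y - b) ^ m / INR (fact m))) b eps delta m);
      auto.
    + intros y; apply derivable_pt_lim_minus; [apply Hd|].
      apply derivable_pt_lim_scal, taylor_monomial_deriv.
    + rewrite Hz, Rminus_diag, pow_i by lia; unfold Rdiv; ring.
    + intros y Hy; apply (IH (fun j => f (S j)) b c eps delta); auto.
      intros j Hj; apply Hz; lia.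
Qed.

Lemma taylor_ratio_limit (m : nat) (f : nat -> R -> R) (b : R) :
  (forall j x, derivable_pt_lim (f j) x (f (S j) x)) -> (forall j, (j < m)%nat -> f j b = 0) ->
  limit1_in (fun x => f 0%nat x / ((x - b) ^ m / INR (fact m))) (fun x => x <> b) (f m b) b.
Proof.
  intros Hd Hz eps He.
  assert (HF : 0 < INR (fact m)) by apply INR_fact_lt_0.
  set (e := eps / (2 * INR (fact m))).
  assert (Hep : 0 < e) by (unfold e; apply Rdiv_lt_0_compat; lra).
  assert (Hcont : continuity_pt (f m) b)
    by (apply derivable_continuous_pt; exists (f (S m) b); apply Hd).
  destruct (Hcont e Hep) as [delta [Hdelta Hnear]].
  exists delta; split; [exact Hdelta|]; intros x [Hxb Hxd]; simpl in *; unfold R_dist in *.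
  assert (Hbound : forall y, Rabs (y - b) < delta -> Rabs (f m y - f m b) <= e).
  { intros y Hy; destruct (Req_dec y b) as [->|Hyb].
    - rewrite Rminus_diag, Rabs_R0; lra.
    - left; apply Hnear; repeat split; auto. }
  assert (T := taylor_remainder_bound m f b (f m b) e delta Hd Hz ltac:(lra) Hbound x Hxd).
  assert (Hpos : 0 < Rabs (x - b) ^ m) by (apply pow_lt, Rabs_pos_lt; lra).
  assert ((x - b) ^ m <> 0) by (apply pow_nonzero; lra).
  replace (f 0%nat x / ((x - b) ^ m / INR (fact m)) - f m b) with
    ((f 0%nat x - f m b * ((x - b) ^ m / INR (fact m))) * (INR (fact m) / (x - b) ^ m))
    by (field; split; lra).
  unfold Rdiv at 2; rewrite !Rabs_mult, Rabs_inv, (Rabs_right (INR _)), <- RPow_abs by lra.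
  apply (Rle_lt_trans _ (e * Rabs (x - b) ^ m * (INR (fact m) * / Rabs (x - b) ^ m))).
  - apply Rmult_le_compat_r; [apply Rlt_le, Rmult_lt_0_compat, Rinv_0_lt_compat; lra | exact T].
  - unfold e; field_simplify; lra.
Qed.

(** * Limits of complex functions, componentwise *)

Definition Ccv (g : R -> Cx) (b : R) (l : Cx) : Prop :=
  limit1_in (fun x => Re (g x)) (fun x => x <> b) (Re l) b /\
  limit1_in (fun x => Im (g x)) (fun x => x <> b) (Im l) b.

Lemma Cmod_le (z : Cx) : Cmod z <= Rabs (Re z) + Rabs (Im z).
Proof.
  unfold Cmod; pose proof (Rabs_pos (Re z)); pose proof (Rabs_pos (Im z)).
  rewrite <- (sqrt_square (Rabs (Re z) + Rabs (Im z))) by lra.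
  apply sqrt_le_1_alt.
  assert (Re z * Re z = Rabs (Re z) * Rabs (Re z)) by (rewrite <- Rabs_mult, Rabs_right; nra).
  assert (Im z * Im z = Rabs (Im z) * Rabs (Im z)) by (rewrite <- Rabs_mult, Rabs_right; nra).
  nra.
Qed.

Lemma Clim_of_Ccv (g : R -> Cx) (b : R) (l : Cx) : Ccv g b l -> Clim g b l.
Proof.
  intros [LRe LIm] eps He.
  destruct (LRe (eps / 2) ltac:(lra)) as [d1 [Hd1 H1]].
  destruct (LIm (eps / 2) ltac:(lra)) as [d2 [Hd2 H2]].
  exists (Rmin d1 d2); split; [apply Rmin_pos; lra|]; intros x Hxb Hxd.
  specialize (H1 x (conj Hxb (Rlt_le_trans _ _ _ Hxd (Rmin_l d1 d2)))).
  specialize (H2 x (conj Hxb (Rlt_le_trans _ _ _ Hxd (Rmin_r d1 d2)))).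
  simpl in H1, H2; unfold R_dist in H1, H2.
  apply (Rle_lt_trans _ _ _ (Cmod_le _)); simpl; unfold Rminus in *; lra.
Qed.

Lemma Ccv_ext (g h : R -> Cx) (b : R) (l : Cx) :
  (forall x, x <> b -> g x = h x) -> Ccv g b l -> Ccv h b l.
Proof.
  intros E [LRe LIm]; split; eapply limit1_ext; eauto; intros x Hx; simpl; rewrite E; auto.
Qed.

Lemma Ccv_div (u v : R -> Cx) (b : R) (p q : Cx) :
  Ccv u b p -> Ccv v b q -> q <> Czero -> Ccv (fun x => Cdiv (u x) (v x)) b (Cdiv p q).
Proof.
  intros [URe UIm] [VRe VIm] Hq.
  assert (Norm : limit1_in (fun x => / (Re (v x) * Re (v x) + Im (v x) * Im (v x)))
                   (fun x => x <> b) (/ (Re q * Re q + Im q * Im q)) b).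
  { apply limit_inv; [apply limit_plus; apply limit_mul; assumption | apply Cnorm_nonzero, Hq]. }
  unfold Cdiv, Cmul, Cinv, Ccv; simpl; unfold Rdiv.
  split; repeat first [assumption | apply limit_minus | apply limit_plus | apply limit_mul
                      | apply limit_Ropp].
Qed.

Lemma Clim_ratio (m : nat) (F G : nat -> R -> Cx) (b : R) :
  deriv_chain F -> deriv_chain G ->
  (forall j, (j < m)%nat -> F j b = Czero) -> (forall j, (j < m)%nat -> G j b = Czero) ->
  G m b <> Czero ->
  Clim (fun x => Cdiv (F 0%nat x) (G 0%nat x)) b (Cdiv (F m b) (G m b)).
Proof.
  intros CF CG ZF ZG Hg.
  set (t := fun x => (x - b) ^ m / INR (fact m)).
  assert (Scaled : forall H, deriv_chain H -> (forall j, (j < m)%nat -> H j b = Czero) ->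
            Ccv (fun x => Cmul (RtoC (/ t x)) (H 0%nat x)) b (H m b)).
  { intros H CH ZH; split; eapply limit1_ext;
      [| apply (taylor_ratio_limit m (fun j x => Re (H j x)) b)
       | | apply (taylor_ratio_limit m (fun j x => Im (H j x)) b)];
      try (intros j x; apply (CH j x)); try (intros j Hj; rewrite ZH by exact Hj; reflexivity);
      intros; unfold t; simpl; unfold Rdiv; ring. }
  apply Clim_of_Ccv; eapply Ccv_ext; [| apply Ccv_div; [apply Scaled | apply Scaled | ]; auto].
  intros x Hx; apply Cdiv_scale, Rinv_neq_0_compat; unfold t, Rdiv.
  apply Rmult_integral_contrapositive; split;
    [apply pow_nonzero; lra | apply Rinv_neq_0_compat, INR_fact_neq_0].
Qed.

(** * The expansion of [exp((x - a) l_n)] in the Bernstein basis *)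

Section Expansion.
Variables (lam : nat -> Cx) (n : nat) (a b : R) (P Q : nat -> nat -> R -> Cx).
Hypotheses (Hn : (1 <= n)%nat) (Hab : a <> b)
  (En : ECT (lams lam n) (fun x => x = a \/ x = b))
  (En1 : ECT (lams lam (n - 1)) (fun x => x = a \/ x = b))
  (BP : bernstein_basis (lams lam n) a b P)
  (BQ : bernstein_basis (lams lam (n - 1)) a b Q).

(** The limit [d_k] computed by l'Hopital: [p_(n,k)^(n-k)(b) / p_(n-1,k)^(n-1-k)(b)]. *)
Definition d (k : nat) : Cx := Cdiv (P k (n - k)%nat b) (Q k (n - 1 - k)%nat b).

(** [d_k <> 0]: both Hermite values at [b] are of exact order. *)
Lemma d_nonzero (k : nat) : (k < n)%nat -> d k <> Czero.
Proof.
  intros Hk; apply Cmul_nonzero; [| apply Cinv_nonzero];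
    [apply (bernstein_top_b _ _ _ _ _ BP) | apply (bernstein_top_b _ _ _ _ _ BQ)]; lia.
Qed.

Lemma d_mul (k : nat) : (k < n)%nat -> Cmul (d k) (Q k (n - 1 - k)%nat b) = P k (n - k)%nat b.
Proof. intros Hk; apply Cdiv_mul_r, (bernstein_top_b _ _ _ _ _ BQ); lia. Qed.

(** [p_(n,k)'] and [p_(n-1,k)] both vanish to order exactly [n - 1 - k] at [b]. *)
Lemma d_limit (k : nat) : (k < n)%nat ->
  Clim (fun x => Cdiv (P k 1%nat x) (Q k 0%nat x)) b (d k).
Proof.
  intros Hk; unfold d; replace (n - k)%nat with (S (n - 1 - k)) by lia.
  apply (Clim_ratio (n - 1 - k) (fun j => P k (S j)) (Q k) b).
  - intros j; apply (bernstein_in_E _ _ _ _ _ BP k ltac:(lia)).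
  - apply (bernstein_in_E _ _ _ _ _ BQ k ltac:(lia)).
  - intros j Hj; apply (bernstein_zero_b _ _ _ _ _ BP); lia.
  - intros j Hj; apply (bernstein_zero_b _ _ _ _ _ BQ); lia.
  - apply (bernstein_top_b _ _ _ _ _ BQ); lia.
Qed.

Lemma shift_P_at_a (i j : nat) : (1 <= i <= n)%nat -> (j < i)%nat ->
  shift_op (lam n) (P i) j a = Q (i - 1)%nat j a.
Proof.
  intros Hi Hj; rewrite shift_op_at_zero by (apply (bernstein_zero_a _ _ _ _ _ BP); lia).
  destruct (Nat.eq_dec (S j) i) as [<-|Hne].
  - rewrite Nat.sub_1_r; simpl Nat.pred.
    rewrite (bernstein_one_a _ _ _ _ _ BP), (bernstein_one_a _ _ _ _ _ BQ) by lia; reflexivity.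
  - rewrite (bernstein_zero_a _ _ _ _ _ BP), (bernstein_zero_a _ _ _ _ _ BQ) by lia; reflexivity.
Qed.

Lemma shift_P_at_b (i j : nat) : (i < n)%nat -> (j < n - i)%nat ->
  shift_op (lam n) (P i) j b = Cmul (d i) (Q i j b).
Proof.
  intros Hi Hj; rewrite shift_op_at_zero by (apply (bernstein_zero_b _ _ _ _ _ BP); lia).
  destruct (Nat.eq_dec (S j) (n - i)) as [Hlast|Hne].
  - rewrite Hlast; replace j with (n - 1 - i)%nat by lia; rewrite d_mul by lia; reflexivity.
  - rewrite (bernstein_zero_b _ _ _ _ _ BP), (bernstein_zero_b _ _ _ _ _ BQ) by lia; Cring.
Qed.

Lemma shift_P_in_E (i : nat) : (i <= n)%nat -> in_E (lams lam (n - 1)) (shift_op (lam n) (P i)).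
Proof. intros Hi; apply in_E_shift, (bernstein_in_E _ _ _ _ _ BP); auto. Qed.

Lemma length_lams_pred : (length (lams lam (n - 1)) - 1 = n - 1)%nat.
Proof. rewrite length_lams; lia. Qed.

(** The three shapes of [L p_i = (d/dx - l_n) p_(n,i)] in the basis [q = p_(n-1,.)],
    each by uniqueness of two-point Hermite interpolation in [E_(l_0..l_(n-1))];
    first [L p_0 = d_0 q_0]. *)
Lemma shift_P_first (j : nat) (x : R) :
  shift_op (lam n) (P 0%nat) j x = Cmul (d 0%nat) (Q 0%nat j x).
Proof.
  apply (ECT_two_point_unique _ a b _ (fun j x => Cmul (d 0%nat) (Q 0%nat j x)) 0 n En1 Hab);
    [apply shift_P_in_E; lia | | intros; lia | | rewrite length_lams_pred; lia].
  - pose proof (bernstein_in_E _ _ _ _ _ BQ 0 ltac:(lia)) as HQ0.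
    eapply in_E_ext; [apply (in_E_lin _ (d 0%nat) Czero _ _ HQ0 HQ0) | intros; Cring].
  - intros i Hi; apply shift_P_at_b; lia.
Qed.

Lemma shift_P_middle (i j : nat) (x : R) : (1 <= i < n)%nat ->
  shift_op (lam n) (P i) j x = Cadd (Q (i - 1)%nat j x) (Cmul (d i) (Q i j x)).
Proof.
  intros Hi.
  apply (ECT_two_point_unique _ a b _
           (fun j x => Cadd (Q (i - 1)%nat j x) (Cmul (d i) (Q i j x))) i (n - i) En1 Hab);
    [apply shift_P_in_E; lia | | | | rewrite length_lams_pred; lia].
  - pose proof (bernstein_in_E _ _ _ _ _ BQ (i - 1) ltac:(lia)) as HQprev.
    pose proof (bernstein_in_E _ _ _ _ _ BQ i ltac:(lia)) as HQi.
    eapply in_E_ext; [apply (in_E_lin _ Cone (d i) _ _ HQprev HQi) | intros; Cring].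
  - intros k Hk; rewrite shift_P_at_a, (bernstein_zero_a _ _ _ _ _ BQ i k) by lia; Cring.
  - intros k Hk; rewrite shift_P_at_b, (bernstein_zero_b _ _ _ _ _ BQ (i - 1) k) by lia; Cring.
Qed.

Lemma shift_P_last (j : nat) (x : R) : shift_op (lam n) (P n) j x = Q (n - 1)%nat j x.
Proof.
  apply (ECT_two_point_unique _ a b _ (Q (n - 1)%nat) n 0 En1 Hab);
    [apply shift_P_in_E; lia | apply (bernstein_in_E _ _ _ _ _ BQ); lia | | intros; lia
    | rewrite length_lams_pred; lia].
  intros k Hk; apply shift_P_at_a; lia.
Qed.

Definition coef (i : nat) : Cx := Cmul (Cpow (Copp Cone) i) (Cprod_from d 0 i).

Lemma coef_S (i : nat) : coef (S i) = Copp (Cmul (coef i) (d i)).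
Proof.
  unfold coef; rewrite Cprod_last; simpl; generalize (Cpow (Copp Cone) i) (Cprod_from d 0 i).
  intros; Cring.
Qed.

Definition expansion (j : nat) (x : R) : Cx := Csum (fun i => Cmul (coef i) (P i j x)) (S n).

(** By telescoping, the expansion solves [f' = l_n f]. *)
Lemma expansion_shift (j : nat) (x : R) : shift_op (lam n) expansion j x = Czero.
Proof.
  unfold expansion; rewrite shift_op_Csum.
  apply (telescoping_sum n coef d (fun i => Q i j x)); auto.
  - unfold coef; simpl; Cring.
  - apply coef_S.
  - apply shift_P_first.
  - intros i Hi; rewrite shift_P_middle, Nat.sub_1_r by lia; reflexivity.
  - apply shift_P_last.
Qed.

Lemma expansion_in_E : in_E (lams lam n) expansion.
Proof.
  apply in_E_of_shift_zero; [exact Hn | | exact expansion_shift].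
  apply deriv_chain_Csum; intros i Hi; apply (bernstein_in_E _ _ _ _ _ BP); lia.
Qed.

(** At [a] only [p_(n,0)] is nonzero, and [c_0 = 1]. *)
Lemma expansion_at_a : expansion 0%nat a = Cone.
Proof.
  unfold expansion; rewrite Csum_first, Csum_zero.
  - rewrite (bernstein_one_a _ _ _ _ _ BP) by lia; unfold coef; simpl; Cring.
  - intros i Hi; rewrite (bernstein_zero_a _ _ _ _ _ BP) by lia; Cring.
Qed.

(** Only [p_(n,n)] does not vanish at [b]. *)
Lemma expansion_at_b : expansion 0%nat b = Cmul (coef n) (P n 0%nat b).
Proof.
  unfold expansion; simpl Csum; rewrite Csum_zero; [Cring|].
  intros i Hi; rewrite (bernstein_zero_b _ _ _ _ _ BP) by lia; Cring.
Qed.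

(** Both [exp((x - a) l_n)] and the expansion lie in [E_(l_0..l_n)], solve
    [f' = l_n f] and equal [1] at [a]: they coincide. *)
Lemma exp_chain_expansion (j : nat) (x : R) : exp_chain (lam n) a j x = expansion j x.
Proof.
  apply (ECT_two_point_unique _ a b _ _ (S n) 0 En Hab);
    [ apply in_E_of_shift_zero; auto using exp_chain_deriv, exp_chain_shift
    | exact expansion_in_E | | intros; lia | rewrite length_lams; lia ].
  intros k _.
  rewrite (shift_zero_derivs _ _ _ (fun j => exp_chain_shift _ _ j a)),
          (shift_zero_derivs _ _ _ (fun j => expansion_shift j a)),
          exp_chain_at_a, expansion_at_a; reflexivity.
Qed.

Lemma exp_expansion (x : R) :
  Cexp (Cmul (RtoC (x - a)) (lam n)) =
  Cadd (P 0%nat 0%nat x) (Csum (fun i => Cmul (coef (S i)) (P (S i) 0%nat x)) n).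
Proof.
  transitivity (exp_chain (lam n) a 0%nat x); [unfold exp_chain; simpl; Cring|].
  rewrite exp_chain_expansion; unfold expansion; rewrite Csum_first.
  unfold coef at 1; simpl; Cring.
Qed.

(** Evaluating the expansion at [b] gives [exp((b - a) l_n) = c_n p_(n,n)(b)],
    which splits as the stated product identity. *)
Lemma product_identity (k : nat) : (k <= n)%nat ->
  Cprod_from d 0 k =
  Cmul (Cmul (Cpow (Copp Cone) n) (Cdiv (Cexp (Cmul (RtoC (b - a)) (lam n))) (P n 0%nat b)))
       (Cinv (Cprod_from d k (n - k))).
Proof.
  intros Hk.
  assert (Eb : Cexp (Cmul (RtoC (b - a)) (lam n)) = Cmul (coef n) (P n 0%nat b)).
  { rewrite <- expansion_at_b, <- exp_chain_expansion; unfold exp_chain; simpl; Cring. }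
  assert (Hpn : P n 0%nat b <> Czero).
  { rewrite <- (Nat.sub_diag n); apply (bernstein_top_b _ _ _ _ _ BP); lia. }
  assert (Htail : Cprod_from d k (n - k) <> Czero)
    by (apply Cprod_nonzero; intros; apply d_nonzero; lia).
  rewrite Eb; unfold Cdiv; unfold coef.
  replace (Cprod_from d 0 n) with (Cmul (Cprod_from d 0 k) (Cprod_from d k (n - k)))
    by (rewrite <- Cprod_split; f_equal; lia).
  transitivity (Cmul (Cmul (Cmul (Cpow (Copp Cone) n) (Cpow (Copp Cone) n))
                           (Cmul (Cprod_from d k (n - k)) (Cinv (Cprod_from d k (n - k)))))
                     (Cmul (Cprod_from d 0 k) (Cmul (P n 0%nat b) (Cinv (P n 0%nat b))))).
  - rewrite Cpow_sign_sq, !Cmul_inv_r by assumption; Cring.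
  - generalize (Cpow (Copp Cone) n) (Cprod_from d 0 k) (Cprod_from d k (n - k)); intros; Cring.
Qed.

End Expansion.

Theorem mainTheorem10 (lam : nat -> Cx) (n : nat) (a b : R)
  (P Q : nat -> nat -> R -> Cx) :
  (1 <= n)%nat -> a <> b ->
  ECT (lams lam n) (fun x => x = a \/ x = b) ->
  ECT (lams lam (n - 1)) (fun x => x = a \/ x = b) ->
  bernstein_basis (lams lam n) a b P ->
  bernstein_basis (lams lam (n - 1)) a b Q ->
  exists d : nat -> Cx,
    (forall k, (k < n)%nat ->
       Clim (fun x => Cdiv (P k 1%nat x) (Q k 0%nat x)) b (d k) /\ d k <> Czero) /\
    (forall x : R,
       Cexp (Cmul (RtoC (x - a)) (lam n)) =
       Cadd (P 0%nat 0%nat x)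
            (Csum (fun i => Cmul (Cmul (Cpow (Copp Cone) (S i)) (Cprod_from d 0 (S i)))
                                 (P (S i) 0%nat x)) n)) /\
    (forall k, (1 <= k)%nat -> (k <= n - 1)%nat ->
       Cprod_from d 0 k =
       Cmul (Cmul (Cpow (Copp Cone) n)
                  (Cdiv (Cexp (Cmul (RtoC (b - a)) (lam n))) (P n 0%nat b)))
            (Cinv (Cprod_from d k (n - k)))).
Proof.
  intros Hn Hab En En1 BP BQ.
  exists (d n b P Q); split; [|split].
  - intros k Hk; split; [apply (d_limit lam n a) | apply (d_nonzero lam n a)]; assumption.
  - apply (exp_expansion lam n a b P Q); assumption.
  - intros k _ Hk; apply (product_identity lam n a b P Q); try assumption; lia.
Qed.
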